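(* Place the almost positive roots of type $C_n$ in the off-diagonal entries of an $(n+1)\times(n+1)$ array via: entry $(1,j)$ ($2\le j\le n+1$) is $-\alpha_{j-1}$; entry $(i,j)$ with $2\le i<j$ is $\varepsilon_{i-1}-\varepsilon_{j-1}$; entry $(i,j)$ with $i>j$ is $\varepsilon_j+\varepsilon_{i-1}$. Then any two almost positive roots lying in the same row or in the same column of this array are $\underline c$-compatible.
   Context: Type $C_n$: standard basis $\varepsilon_i$ of $\mathbb{R}^n$, simple roots $\alpha_i=\varepsilon_i-\varepsilon_{i+1}$ ($i<n$), $\alpha_n=2\varepsilon_n$, $\Pi$ the simple roots, $\Phi_+=\{\varepsilon_i\pm\varepsilon_j:i<j\}\cup\{2\varepsilon_i\}$, $\Phi_{\ge-1}=\Phi_+\sqcup(-\Pi)$. With simple reflections $s_i$ and $c=s_1\cdots s_n$, $\tau:\Phi_{\ge-1}\to\Phi_{\ge-1}$ is $\tau(-\alpha_i)=s_1\cdots s_{i-1}(\alpha_i)$, $\tau(s_n\cdots s_{i+1}(\alpha_i))=-\alpha_i$, $\tau(\alpha)=c(\alpha)$ otherwise. The $\underline c$-compatibility degree is the unique $\tau$-invariant function $\Phi_{\ge-1}^2\to\mathbb{Z}$ with $(-\alpha\|_{\underline c}-\alpha')=0$ for $\alpha,\alpha'\in\Pi$ and $(-\alpha\|_{\underline c}\beta)=[\beta:\alpha]$ (coefficient of $\alpha$ in $\beta$) for $\alpha\in\Pi,\beta\in\Phi_+$; two roots are $\underline c$-compatible if their degree is $0$. *)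

From HB Require Import structures.
From mathcomp Require Import all_boot all_order all_algebra.
Set Implicit Arguments. Unset Strict Implicit. Unset Printing Implicit Defensive.
Import Order.TTheory GRing.Theory Num.Theory.
Local Open Scope ring_scope.

Section TypeC.
Variable n : nat.
Local Notation vec := 'rV[rat]_n.

(* standard basis vector eps_k, 0-based index k (paper's eps_{k+1}) *)
Definition eps (k : nat) : vec := \row_(j < n) (if (j : nat) == k then 1 else 0).

Definition alpha (k : nat) : vec :=
  if (k.+1 < n)%N then eps k - eps k.+1 else 2 *: eps k.

Definition dot (u v : vec) : rat := \sum_(j < n) u 0 j * v 0 j.

Definition sref (k : nat) (v : vec) : vec :=
  v - (2 * dot v (alpha k) / dot (alpha k) (alpha k)) *: alpha k.

(* apply s_{k1} s_{k2} ... s_{km} (composition, rightmost first) to v *)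
Definition sword (w : seq nat) (v : vec) : vec := foldr sref v w.

Definition cox (v : vec) : vec := sword (iota 0 n) v.

(* s_1 ... s_{i-1} (alpha_i) in 0-based indices: s_0 ... s_{i-1} (alpha i) *)
Definition tau_neg_img (i : 'I_n) : vec := sword (iota 0 i) (alpha i).
(* s_n ... s_{i+1} (alpha_i): 0-based s_{n-1} ... s_{i+1} (alpha i) *)
Definition tau_pre_neg (i : 'I_n) : vec := sword (rev (iota i.+1 (n - i.+1))) (alpha i).

Definition tau (v : vec) : vec :=
  match [pick i : 'I_n | v == - alpha i] with
  | Some i => tau_neg_img i
  | None =>
    match [pick i : 'I_n | v == tau_pre_neg i] with
    | Some i => - alpha i
    | None => cox v
    end
  end.

Definition pos_root (v : vec) : Prop :=
  (exists (i j : 'I_n), (i < j)%N /\ (v = eps i - eps j \/ v = eps i + eps j))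
  \/ exists i : 'I_n, v = 2 *: eps i.

Definition ap_root (v : vec) : Prop := pos_root v \/ exists i : 'I_n, v = - alpha i.

(* The c-compatibility degree characterization: f is tau-invariant on
   Phi_{>=-1} and satisfies the initial conditions. *)
Definition is_compat_degree (f : vec -> vec -> int) : Prop :=
  [/\ forall a b, ap_root a -> ap_root b -> f (tau a) (tau b) = f a b,
      forall i j : 'I_n, f (- alpha i) (- alpha j) = 0 &
      forall (i : 'I_n) (b : vec) (c : 'I_n -> rat),
        pos_root b -> b = \sum_(j < n) c j *: alpha j -> (f (- alpha i) b)%:~R = c i].

(* the (n+1)x(n+1) array, 0-based row r and column s (paper's r+1, s+1) *)
Definition entry (r s : 'I_n.+1) : vec :=
  if (r : nat) == 0%N then - alpha (s.-1)
  else if (r < s)%N then eps (r.-1) - eps (s.-1)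
  else eps s + eps (r.-1).

End TypeC.

(* The roots tau^m(-alpha_j), m = 0, ..., n, form a tau-orbit of length n + 1, and the
   off-diagonal entry (r, s) of the array (0-based) is tau^r(-alpha_j) for the j with
   j + r = s - 1 mod n + 1.  Since the compatibility degree is tau-invariant, applying
   tau^(n+1-r) to two entries of row r turns them into two negative simple roots, whose
   degree is 0.  Applying tau^(n+1-r1) to the entries (r1, s) and (r2, s) of a column
   turns them into -alpha_a and tau^m(-alpha_b) with b + m = a mod n + 1; the latter is
   either -alpha_a itself or a positive root whose simple-root expansion avoids alpha_a,
   so the degree is again 0. *)

From HB Require Import structures.
From mathcomp Require Import all_boot all_order all_algebra.
From mathcomp Require Import zify ring lra.
Set Implicit Arguments.
Unset Strict Implicit.
Unset Printing Implicit Defensive.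

Import Order.TTheory GRing.Theory Num.Theory.
Local Open Scope ring_scope.

Lemma sum_indicator_scale (R : pzRingType) (V : lmodType R) (F : nat -> V) n x y :
  (y <= n)%N -> \sum_(k < n) ((x <= k < y)%N)%:R *: F k = \sum_(x <= k < y) F k.
Proof.
move=> yn; rewrite (big_nat_widen _ _ _ _ _ yn) big_geq_mkord.
rewrite [RHS]big_mkcond; apply: eq_bigr => k _; rewrite andbC.
by case: (_ && _); rewrite ?scale1r ?scale0r.
Qed.

Lemma iotaSr m i : iota m i.+1 = iota m i ++ [:: (m + i)%N].
Proof. by rewrite -addn1 iotaD. Qed.

Lemma modn_succ m d :
  (m.+1 %% d.+1 = if m %% d.+1 == d then 0 else (m %% d.+1).+1)%N.
Proof.
rewrite -addn1 -modnDml addn1; have := ltn_pmod m (ltn0Sn d).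
by case: eqP => [-> _ | md lt_md]; rewrite ?modnn // modn_small //; lia.
Qed.

Lemma modn_shift_back a b r1 r2 d : (a < d)%N -> (r1 <= d)%N ->
  ((a + r1) %% d = (b + r2) %% d)%N -> ((b + (r2 + (d - r1))) %% d = a)%N.
Proof.
move=> ad r1d e; rewrite addnA -modnDml -e modnDml -addnA subnKC //.
by rewrite modnDr modn_small.
Qed.

Section TypeCOrbits.
Variable n : nat.
Local Notation vec := 'rV[rat]_n.
Local Notation eps := (eps n).
Local Notation alpha := (alpha n).
Local Notation sref := (@sref n).
Implicit Types (u v w : vec) (ks : seq nat).

Lemma eps_coord a (t : 'I_n) : eps a 0 t = (t == a :> nat)%:R.
Proof. by rewrite mxE; case: eqP. Qed.

Lemma dot_epsl a v (ha : (a < n)%N) : dot (eps a) v = v 0 (Ordinal ha).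
Proof.
rewrite /dot (bigD1 (Ordinal ha)) //= big1 ?addr0 ?eps_coord ?eqxx ?mul1r // => j /eqP hj.
rewrite eps_coord; case: eqP => ja; last by rewrite mul0r.
by case: hj; apply: val_inj.
Qed.

Lemma dot_eps a b : (a < n)%N -> dot (eps a) (eps b) = (a == b)%:R.
Proof. by move=> ha; rewrite dot_epsl eps_coord. Qed.

Lemma dotC u v : dot u v = dot v u.
Proof. by apply: eq_bigr => j _; rewrite mulrC. Qed.

Lemma dotDl u v w : dot (u + v) w = dot u w + dot v w.
Proof. by rewrite /dot -big_split; apply: eq_bigr => j _; rewrite mxE mulrDl. Qed.

Lemma dotZl c u w : dot (c *: u) w = c * dot u w.
Proof. by rewrite /dot mulr_sumr; apply: eq_bigr => j _; rewrite mxE mulrA. Qed.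

Lemma dotNl u w : dot (- u) w = - dot u w.
Proof. by rewrite -scaleN1r dotZl mulN1r. Qed.

Lemma dotBl u v w : dot (u - v) w = dot u w - dot v w.
Proof. by rewrite dotDl dotNl. Qed.

Lemma dotZr c u w : dot u (c *: w) = c * dot u w.
Proof. by rewrite dotC dotZl dotC. Qed.

Lemma dotDr u v w : dot u (v + w) = dot u v + dot u w.
Proof. by rewrite dotC dotDl !(dotC u). Qed.

Lemma dotBr u v w : dot u (v - w) = dot u v - dot u w.
Proof. by rewrite dotC dotBl !(dotC u). Qed.

Lemma alpha_short k : (k.+1 < n)%N -> alpha k = eps k - eps k.+1.
Proof. by move=> hk; rewrite /alpha hk. Qed.

Lemma alpha_last : alpha n.-1 = 2 *: eps n.-1.
Proof. by rewrite /alpha; case: n => //= m; rewrite ltnn. Qed.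

Lemma sref_eps_short k a : (k.+1 < n)%N -> (a < n)%N ->
  sref k (eps a) = eps a - ((a == k)%:R - (a == k.+1)%:R) *: (eps k - eps k.+1).
Proof.
move=> hk1 ha; have hk := ltnW hk1.
rewrite /sref alpha_short // !(dotBl, dotBr) !dot_eps // !eqxx.
rewrite (ltn_eqF (ltnSn k)) (gtn_eqF (ltnSn k)).
by congr (_ - _ *: _) => /=; field.
Qed.

Lemma sref_eps_last a : (a < n)%N ->
  sref n.-1 (eps a) = eps a - (a == n.-1)%:R *: (2 *: eps n.-1).
Proof.
move=> ha; have hn : (n.-1 < n)%N by lia.
rewrite /sref alpha_last !(dotZl, dotZr) !dot_eps // eqxx.
by congr (_ - _ *: _) => /=; field.
Qed.

Lemma sref_eps_fix k a : (k < n)%N -> (a < n)%N -> a != k -> a != k.+1 ->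
  sref k (eps a) = eps a.
Proof.
move=> hk ha /negbTE ak /negbTE ak1; case: (ltnP k.+1 n) => hk1.
  by rewrite sref_eps_short // ak ak1 subrr scale0r subr0.
have kn : k = n.-1 by lia.
by rewrite kn sref_eps_last // -kn ak scale0r subr0.
Qed.

Lemma sref_eps_succ k : (k.+1 < n)%N -> sref k (eps k) = eps k.+1.
Proof.
move=> hk1; have hk := ltnW hk1.
rewrite sref_eps_short // eqxx (ltn_eqF (ltnSn k)) subr0 scale1r.
by rewrite opprB addrC subrK.
Qed.

Lemma sref_eps_pred k : (k.+1 < n)%N -> sref k (eps k.+1) = eps k.
Proof.
move=> hk1; rewrite sref_eps_short // eqxx (gtn_eqF (ltnSn k)) sub0r scaleN1r opprK.
by rewrite addrC subrK.
Qed.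

Lemma sref_eps_last_self : (0 < n)%N -> sref n.-1 (eps n.-1) = - eps n.-1.
Proof.
move=> n0; rewrite sref_eps_last ?prednK // eqxx scale1r scalerDl scale1r.
by rewrite opprD addrA subrr add0r.
Qed.

Lemma sref_is_linear k : linear (sref k).
Proof.
by move=> c u v; rewrite /sref dotDl dotZl; apply/rowP => t; rewrite !mxE; ring.
Qed.

HB.instance Definition _ (k : nat) :=
  GRing.isLinear.Build rat vec vec *:%R (sref k) (sref_is_linear k).

Lemma swordD ks u v : sword ks (u + v) = sword ks u + sword ks v.
Proof. by elim: ks => //= k ks IH; rewrite IH raddfD. Qed.

Lemma swordZ ks c u : sword ks (c *: u) = c *: sword ks u.
Proof. by elim: ks => //= k ks IH; rewrite IH linearZ. Qed.

Lemma swordN ks u : sword ks (- u) = - sword ks u.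
Proof. by rewrite -scaleN1r swordZ scaleN1r. Qed.

Lemma swordB ks u v : sword ks (u - v) = sword ks u - sword ks v.
Proof. by rewrite swordD swordN. Qed.

Lemma coxD u v : cox (u + v) = cox u + cox v.
Proof. exact: swordD. Qed.

Lemma coxB u v : cox (u - v) = cox u - cox v.
Proof. exact: swordB. Qed.

Lemma sword_cat ks1 ks2 v : sword (ks1 ++ ks2) v = sword ks1 (sword ks2 v).
Proof. exact: foldr_cat. Qed.

Lemma sword_eps_fix ks a : (a < n)%N ->
  {in ks, forall k, (k < n)%N && ((k.+1 < a) || (a < k))%N} -> sword ks (eps a) = eps a.
Proof.
move=> ha; elim: ks => //= k ks IH fixed.
have /andP[hk far] := fixed k (mem_head k ks).
rewrite IH ?sref_eps_fix //; try lia.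
by move=> x xks; apply: fixed; rewrite inE xks orbT.
Qed.

Lemma sword_iota0_eps i : (i < n)%N -> sword (iota 0 i) (eps i) = eps 0.
Proof.
elim: i => // i IH hi.
by rewrite iotaSr sword_cat /= sref_eps_pred // IH // ltnW.
Qed.

Lemma sword_rev_iota_eps x y : (x + y < n)%N ->
  sword (rev (iota x y)) (eps x) = eps (x + y)%N.
Proof.
elim: y => [|y IH] hxy; first by rewrite addn0.
by rewrite iotaSr rev_cat /= IH ?sref_eps_succ ?addnS //; lia.
Qed.

Lemma cox_eps a : (a < n)%N ->
  cox (eps a) = if (a.+1 < n)%N then eps a.+1 else - eps 0.
Proof.
move=> ha; rewrite /cox.
have -> : iota 0 n = iota 0 a ++ [:: a] ++ iota a.+1 (n - a.+1).
  by rewrite catA -iotaSr -iotaD subnKC.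
rewrite !sword_cat [sword (iota a.+1 _) _]sword_eps_fix /=; last 2 first.
- by [].
- by move=> k; rewrite mem_iota; lia.
case: ifP => ha1.
  by rewrite sref_eps_succ // sword_eps_fix // => k; rewrite mem_iota; lia.
have -> : a = n.-1 by lia.
by rewrite sref_eps_last_self ?swordN ?sword_iota0_eps //; lia.
Qed.

Lemma tau_neg_img_eps (i : 'I_n) :
  tau_neg_img i = if (i.+1 < n)%N then eps 0 - eps i.+1 else 2 *: eps 0.
Proof.
rewrite /tau_neg_img /alpha; case: ifP => hi; last by rewrite swordZ sword_iota0_eps.
by rewrite swordB sword_iota0_eps // sword_eps_fix // => k; rewrite mem_iota; lia.
Qed.

Lemma tau_pre_neg_eps (i : 'I_n) : tau_pre_neg i = eps i + eps n.-1.
Proof.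
have hi := ltn_ord i; rewrite /tau_pre_neg /alpha; case: ifP => hi1; last first.
  have -> : (n - i.+1 = 0)%N by lia.
  have -> : nat_of_ord i = n.-1 by lia.
  by rewrite /= scaler_nat mulr2n.
rewrite swordB sword_eps_fix //; last by move=> k; rewrite mem_rev mem_iota; lia.
have -> : (n - i.+1 = (n.-1 - i.+1).+1)%N by lia.
rewrite iotaSr rev_cat /= sword_rev_iota_eps; last by lia.
have -> : (i.+1 + (n.-1 - i.+1) = n.-1)%N by lia.
by rewrite sref_eps_last_self ?opprK //; lia.
Qed.

Lemma eps_inj a b : (a < n)%N -> eps a = eps b -> a = b.
Proof.
move=> ha e; have : dot (eps a) (eps b) = 1 by rewrite -e dot_eps // eqxx.
by rewrite dot_eps //; case: eqP => // _ /eqP; rewrite eq_sym oner_eq0.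
Qed.

Lemma alpha_inj (i j : 'I_n) : alpha i = alpha j -> i = j.
Proof.
move=> e; apply/val_inj/eqP/negPn/negP => ij.
have := congr1 (dot (eps i)) e; rewrite /alpha.
case: ifP; case: ifP => _ _; rewrite ?(dotBr, dotZr) !dot_eps // eqxx (negbTE ij).
all: rewrite ?(ltn_eqF (ltnSn i)) /=; by [lra | case: (_ == _) => /=; lra].
Qed.

Definition rho : vec := \row_(t < n) (n - t)%:R.

Lemma dot_eps_rho a : (a < n)%N -> dot (eps a) rho = (n - a)%:R.
Proof. by move=> ha; rewrite dot_epsl mxE. Qed.

Lemma pos_root_rho v : pos_root v -> 0 < dot v rho.
Proof.
case=> [[i [j [ij [->|->]]]]|[i ->]].
- by rewrite dotBl !dot_eps_rho // subr_gt0 ltr_nat ltn_sub2l.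
- by rewrite dotDl !dot_eps_rho // addr_gt0 // ltr0n subn_gt0.
- by rewrite dotZl dot_eps_rho // mulr_gt0 // ltr0n subn_gt0.
Qed.

Lemma neg_simple_rho (i : 'I_n) : dot (- alpha i) rho < 0.
Proof.
have hi := ltn_ord i; rewrite dotNl oppr_lt0 /alpha; case: ifP => hi1.
  by rewrite dotBl !dot_eps_rho // subr_gt0 ltr_nat; lia.
by rewrite dotZl dot_eps_rho // mulr_gt0 // ltr0n; lia.
Qed.

Lemma pos_root_neq_neg_simple (i : 'I_n) v : pos_root v -> v != - alpha i.
Proof.
move=> /pos_root_rho v_pos; apply/eqP => e.
by have := neg_simple_rho i; rewrite -e; lra.
Qed.

Lemma pos_root_eps_sub a b : (a < b)%N -> (b < n)%N -> pos_root (eps a - eps b).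
Proof.
move=> ab hb; have ha := ltn_trans ab hb.
by left; exists (Ordinal ha), (Ordinal hb); split => //; left.
Qed.

Lemma pos_root_eps_add a b : (a <= b)%N -> (b < n)%N -> pos_root (eps a + eps b).
Proof.
move=> ab hb; have ha := leq_ltn_trans ab hb.
case: (ltngtP a b) ab => // [ab|<-] _.
  by left; exists (Ordinal ha), (Ordinal hb); split => //; right.
by right; exists (Ordinal ha); rewrite scaler_nat mulr2n.
Qed.

Lemma tau_neg_simple (i : 'I_n) : tau (- alpha i) = tau_neg_img i.
Proof.
rewrite /tau; case: pickP => [k /eqP /oppr_inj /alpha_inj -> // | none].
by have := none i; rewrite eqxx.
Qed.

Lemma tau_pre_neg_root (i : 'I_n) : tau (tau_pre_neg i) = - alpha i.
Proof.
have hi := ltn_ord i.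
have pos : pos_root (tau_pre_neg i).
  by rewrite tau_pre_neg_eps; apply: pos_root_eps_add; lia.
rewrite /tau; case: pickP => [k /eqP e | _].
  by have := pos_root_neq_neg_simple k pos; rewrite e eqxx.
case: pickP => [k /eqP | none]; last by have := none i; rewrite eqxx.
by rewrite !tau_pre_neg_eps => /addIr /(eps_inj hi) /val_inj ->.
Qed.

Lemma tau_pos_root v : pos_root v -> (forall i : 'I_n, v != tau_pre_neg i) ->
  tau v = cox v.
Proof.
move=> pv not_pre; rewrite /tau.
case: pickP => [k /eqP e | _].
  by have := pos_root_neq_neg_simple k pv; rewrite e eqxx.
by case: pickP => [k /eqP e | _] //; have := not_pre k; rewrite e eqxx.
Qed.

(* tau^m (- alpha j), see [tau_orbit_root]. *)
Definition orbit_root (j m : nat) : vec :=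
  let p := (m %% n.+1)%N in
  if p == 0%N then - alpha j
  else if (p + j < n)%N then eps p.-1 - eps (j + p)%N
  else eps (p + j - n)%N + eps p.-1.

Lemma orbit_root_period j : orbit_root j n.+1 = - alpha j.
Proof. by rewrite /orbit_root modnn. Qed.

Lemma orbit_root_pos j m : (j < n)%N -> (m %% n.+1 != 0)%N -> pos_root (orbit_root j m).
Proof.
move=> hj; have := ltn_pmod m (ltn0Sn n); rewrite /orbit_root /=.
set p := (m %% n.+1)%N => hp p0; rewrite (negbTE p0).
by case: ifP => hpj; [apply: pos_root_eps_sub | apply: pos_root_eps_add]; lia.
Qed.

Lemma orbit_root_ap j m : (j < n)%N -> ap_root (orbit_root j m).
Proof.
move=> hj; case: (eqVneq (m %% n.+1)%N 0) => m0; last by left; apply: orbit_root_pos.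
by right; exists (Ordinal hj); rewrite /orbit_root /= m0.
Qed.

Lemma orbit_root_neq_pre_neg j m (i : 'I_n) : (j < n)%N ->
  (0 < m %% n.+1 < n)%N -> orbit_root j m != tau_pre_neg i.
Proof.
move=> hj; rewrite /orbit_root /=; set p := (m %% n.+1)%N => /andP[p0 pn].
have hn : (n.-1 < n)%N by lia.
have p1 : (n.-1 == p.-1) = false by apply/eqP; lia.
(* The last coordinate of the left side is at most 0, that of the right side at least 1. *)
apply/eqP => /(congr1 (dot (eps n.-1))); rewrite tau_pre_neg_eps (gtn_eqF p0) dotDr.
case: ifP => hpj; rewrite ?(dotBr, dotDr) !dot_eps // eqxx p1 /=.
  by case: (_ == _); case: (_ == _) => /=; lra.
rewrite (_ : (n.-1 == p + j - n)%N = false) /=; last by apply/eqP; lia.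
by case: (_ == _) => /=; lra.
Qed.

Lemma cox_orbit_root j m : (j < n)%N -> (0 < m %% n.+1 < n)%N ->
  cox (orbit_root j m) = orbit_root j m.+1.
Proof.
move=> hj; rewrite /orbit_root /= modn_succ; set p := (m %% n.+1)%N => /andP[p0 pn].
rewrite (gtn_eqF p0) (ltn_eqF pn) /=.
case: ifP => hpj.
  rewrite coxB !cox_eps; try lia.
  rewrite prednK // pn.
  have -> : (p.+1 + j = (j + p).+1)%N by lia.
  case: ifP => _; first by rewrite addnS.
  have -> : ((j + p).+1 - n = 0)%N by lia.
  by rewrite opprK addrC.
rewrite coxD !cox_eps; try lia.
rewrite prednK // pn ifT ?ifF; try lia.
by congr (eps _ + _); lia.
Qed.

Lemma tau_orbit_root j m : (j < n)%N -> tau (orbit_root j m) = orbit_root j m.+1.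
Proof.
move=> hj; have hp := ltn_pmod m (ltn0Sn n).
have n0 : (0 < n)%N := leq_ltn_trans (leq0n j) hj.
case: (posnP (m %% n.+1)) => [m0 | p0].
  rewrite /orbit_root /= modn_succ m0 (ltn_eqF n0) /=.
  rewrite (tau_neg_simple (Ordinal hj)) tau_neg_img_eps /= add1n.
  case: ifP => hj1; first by rewrite addn1.
  have -> : (j.+1 - n = 0)%N by lia.
  by rewrite scaler_nat mulr2n.
case: (eqVneq (m %% n.+1)%N n) => [pn | pn].
  rewrite {2}/orbit_root /= modn_succ pn eqxx /=.
  rewrite -(tau_pre_neg_root (Ordinal hj)) /orbit_root /= pn tau_pre_neg_eps.
  by rewrite (gtn_eqF n0) ltnNge leq_addr /= addKn.
have p_lt_n : (0 < m %% n.+1 < n)%N by rewrite p0; lia.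
rewrite tau_pos_root ?cox_orbit_root //.
- by apply: orbit_root_pos; rewrite // -lt0n.
- by move=> i; apply: orbit_root_neq_pre_neg.
Qed.

Lemma compat_orbit_shift (f : vec -> vec -> int) :
  (forall u v, ap_root u -> ap_root v -> f (tau u) (tau v) = f u v) ->
  forall a b p q k, (a < n)%N -> (b < n)%N ->
  f (orbit_root a p) (orbit_root b q) = f (orbit_root a (p + k)) (orbit_root b (q + k)).
Proof.
move=> f_tau a b p q k ha hb; elim: k => [|k IH]; first by rewrite !addn0.
by rewrite IH !addnS -!tau_orbit_root // f_tau //; apply: orbit_root_ap.
Qed.

Lemma eps_sub_telescope x y : (x <= y)%N -> (y < n)%N ->
  eps x - eps y = \sum_(x <= k < y) alpha k.
Proof.
move=> xy yn; have step k : (x <= k < y)%N -> alpha k = - eps k.+1 - - eps k.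
  by move=> /andP[_ ky]; rewrite alpha_short ?opprK ?(addrC (- _)) //; lia.
by rewrite (eq_big_nat _ _ step) telescope_sumr // opprK addrC.
Qed.

Lemma eps_add_telescope x y : (x <= y)%N -> (y < n)%N ->
  eps x + eps y =
  \sum_(x <= k < y) alpha k + 2 *: \sum_(y <= k < n.-1) alpha k + alpha n.-1.
Proof.
move=> xy yn; rewrite -!eps_sub_telescope // ?alpha_last; try lia.
by apply/rowP => t; rewrite !mxE; ring.
Qed.

(* Simple roots are a basis, so this says that the coefficient of alpha i in v is 0. *)
Definition simple_coef_zero v (i : 'I_n) : Prop :=
  exists2 c : 'I_n -> rat, v = \sum_(k < n) c k *: alpha k & c i = 0.

Lemma eps_sub_coef_zero x y (i : 'I_n) : (x <= y)%N -> (y < n)%N ->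
  ~~ (x <= i < y)%N -> simple_coef_zero (eps x - eps y) i.
Proof.
move=> xy yn hi; exists (fun k : 'I_n => ((x <= k < y)%N)%:R); last by rewrite (negbTE hi).
by rewrite sum_indicator_scale ?eps_sub_telescope // ltnW.
Qed.

Lemma eps_add_coef_zero x y (i : 'I_n) : (x <= y)%N -> (y < n)%N -> (i < x)%N ->
  simple_coef_zero (eps x + eps y) i.
Proof.
move=> xy yn ix.
exists (fun k : 'I_n => ((x <= k < y)%N)%:R + 2 * ((y <= k < n.-1)%N)%:R
                        + ((n.-1 <= k < n)%N)%:R); last first.
  have [-> -> ->] : [/\ (x <= i)%N = false, (y <= i)%N = false & (n.-1 <= i)%N = false].
    by split; lia.
  by rewrite /= mulr0 !addr0.
have last_simple : \sum_(n.-1 <= k < n) alpha k = alpha n.-1.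
  by case: n yn => // m _; rewrite big_nat1.
rewrite eps_add_telescope // -last_simple /=.
rewrite (eq_bigr (fun k : 'I_n => ((x <= k < y)%N)%:R *: alpha k
  + 2 *: (((y <= k < n.-1)%N)%:R *: alpha k) + ((n.-1 <= k < n)%N)%:R *: alpha k));
  last by move=> k _; rewrite [LHS]scalerDl [in LHS]scalerDl scalerA.
rewrite !big_split /= -scaler_sumr !sum_indicator_scale //; lia.
Qed.

Lemma orbit_root_coef_zero j m (i : 'I_n) : (j < n)%N -> (m %% n.+1 != 0)%N ->
  ((j + m) %% n.+1 = i)%N -> simple_coef_zero (orbit_root j m) i.
Proof.
move=> hj; have hi := ltn_ord i; have := ltn_pmod m (ltn0Sn n).
rewrite -modnDmr /orbit_root /=; set p := (m %% n.+1)%N => hp p0 ji.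
rewrite (negbTE p0); case: ifP => hpj.
  move: ji; rewrite modn_small => [ji|]; last by lia.
  by apply: eps_sub_coef_zero; lia.
have jp : (n.+1 <= j + p)%N.
  case: (ltngtP n (j + p)) => // [|e]; first by lia.
  by move: ji; rewrite -e modn_small //; lia.
move: ji; rewrite -(subnK jp) modnDr modn_small => [ji|]; last by lia.
by apply: eps_add_coef_zero; lia.
Qed.

Lemma compat_neg_simple_orbit (f : vec -> vec -> int) :
  (forall i j : 'I_n, f (- alpha i) (- alpha j) = 0) ->
  (forall (i : 'I_n) (b : vec) (c : 'I_n -> rat), pos_root b ->
     b = \sum_(j < n) c j *: alpha j -> (f (- alpha i) b)%:~R = c i) ->
  forall j m (i : 'I_n), (j < n)%N -> ((j + m) %% n.+1 = i)%N ->
  f (- alpha i) (orbit_root j m) = 0.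
Proof.
move=> f_neg f_pos j m i hj ji; case: (eqVneq (m %% n.+1)%N 0) => m0.
  move: ji; rewrite -modnDmr m0 addn0 modn_small => [ji|]; last by lia.
  by rewrite /orbit_root /= m0 ji f_neg.
have [c root_sum ci] := orbit_root_coef_zero hj m0 ji.
apply/eqP; rewrite -(intr_eq0 rat) (f_pos i _ c) ?ci //.
exact: orbit_root_pos.
Qed.

Lemma entry_orbit_root (r s : 'I_n.+1) : r != s ->
  exists2 j : 'I_n, entry r s = orbit_root j r & ((j + r) %% n.+1 = (s + n) %% n.+1)%N.
Proof.
move=> /eqP rs; have {}rs : (r : nat) <> s by move=> e; apply/rs/val_inj.
have hr := ltn_ord r; have hs := ltn_ord s.
rewrite /entry /orbit_root /= (modn_small hr).
case: (ltnP r s) => [lt_rs | le_sr].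
  have hj : (s - r.+1 < n)%N by lia.
  exists (Ordinal hj) => /=; last first.
    by rewrite -(modnDr (s - r.+1 + r)); congr (_ %% _)%N; lia.
  case: eqP => [r0 | r0]; first by rewrite r0 subn1.
  rewrite ifT; last by lia.
  by congr (eps _ - eps _); lia.
have hj : (s + n - r < n)%N by lia.
exists (Ordinal hj) => /=; last by congr (_ %% _)%N; lia.
rewrite (_ : ((r : nat) == 0%N) = false); last by lia.
rewrite ifF; last by lia.
by congr (eps _ + _); lia.
Qed.

End TypeCOrbits.

Theorem lemma4p7 (n : nat) (f : 'rV[rat]_n -> 'rV[rat]_n -> int) :
  is_compat_degree f ->
  (forall r s1 s2 : 'I_n.+1, r != s1 -> r != s2 -> s1 != s2 ->
     f (entry r s1) (entry r s2) = 0) /\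
  (forall s r1 r2 : 'I_n.+1, r1 != s -> r2 != s -> r1 != r2 ->
     f (entry r1 s) (entry r2 s) = 0).
Proof.
case=> f_tau f_neg f_pos.
have shift := compat_orbit_shift f_tau.
split=> [r s1 s2 rs1 rs2 _ | s r1 r2 r1s r2s _].
  have [a -> _] := entry_orbit_root rs1; have [b -> _] := entry_orbit_root rs2.
  rewrite (shift _ _ _ _ (n.+1 - r)%N) // subnKC ?orbit_root_period //.
  exact: ltnW.
have [a -> ea] := entry_orbit_root r1s; have [b -> eb] := entry_orbit_root r2s.
rewrite (shift _ _ _ _ (n.+1 - r1)%N) // subnKC ?orbit_root_period; last exact: ltnW.
apply: (compat_neg_simple_orbit f_neg f_pos) => //.
apply: modn_shift_back; last by rewrite ea eb.
  exact: leqW.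
exact: ltnW.
Qed.
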